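(* There is no function $g:\mathbb{N}\to\mathbb{N}$ such that $\operatorname{bcrk}(D)\le g(\operatorname{dbw}(D))$ for every digraph $D$.
   Context: A layout of a symmetric function $f:2^U\to\mathbb{Z}$ on a finite set $U$ is a pair $(T,\beta)$, $T$ a tree of maximum degree at most three, $\beta$ a bijection from leaves of $T$ onto $U$; the order of a tree edge is $f(\beta(Y))$ for $Y$ the leaves on one side; width is the maximum order (0 if none); the layout-$f$-width of $U$ is the minimum width. Directed branch-width: $\operatorname{dbw}(D)$ is the layout-$f_D$-width of $E(D)$ where $f_D(X)=|S^V_X\cup S^V_{E(D)\setminus X}|$ and $S^V_X=\{y: \exists x,z,\ \vec{xy}\in E(D)\setminus X,\ \vec{yz}\in X\}$. Bi-cut-rank-width: with $M$ the $\mathrm{GF}(2)$ adjacency matrix of $D$ ($M_{uv}=1$ iff $\vec{uv}\in E(D)$), $g_D(X)=\operatorname{rk}(M[V(D)\setminus X,X])+\operatorname{rk}(M[X,V(D)\setminus X])$, and $\operatorname{bcrk}(D)$ is the layout-$g_D$-width of $V(D)$. *)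

From mathcomp Require Import all_boot all_order all_algebra.
Set Implicit Arguments. Unset Strict Implicit. Unset Printing Implicit Defensive.

Definition rm_edge (T : finType) (t : rel T) (x y : T) : rel T :=
  [rel a b | t a b && ~~ (((a == x) && (b == y)) || ((a == y) && (b == x)))].

Definition is_tree (T : finType) (t : rel T) : Prop :=
  [/\ symmetric t, irreflexive t,
      (forall x y, connect t x y) &
      (forall x y, t x y -> ~~ connect (rm_edge t x y) x y)].

Definition subcubic (T : finType) (t : rel T) : Prop :=
  forall x, #|[set y | t x y]| <= 3.

Definition leaves (T : finType) (t : rel T) : {set T} :=
  [set x | #|[set y | t x y]| <= 1].

Definition side (T : finType) (t : rel T) (x y : T) : {set T} :=
  [set l in leaves t | connect (rm_edge t x y) x l].

Definition is_layout (U T : finType) (t : rel T) (beta : T -> U) : Prop :=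
  [/\ is_tree t, subcubic t,
      {in leaves t &, injective beta} &
      (forall u, exists2 l, l \in leaves t & beta l = u)].

Definition width_le (U T : finType) (f : {set U} -> nat) (t : rel T)
  (beta : T -> U) (k : nat) : Prop :=
  forall x y, t x y -> f (beta @: side t x y) <= k.

Definition layout_width_le (U : finType) (f : {set U} -> nat) (k : nat) : Prop :=
  exists (T : finType) (t : rel T) (beta : T -> U),
    is_layout t beta /\ width_le f t beta k.

Definition layout_width (U : finType) (f : {set U} -> nat) (k : nat) : Prop :=
  layout_width_le f k /\ forall j, layout_width_le f j -> k <= j.

Definition arc (V : finType) (E : rel V) := {p : V * V | E p.1 p.2}.

Definition SV (V : finType) (E : rel V) (X : {set arc E}) : {set V} :=
  [set y | [exists a : arc E, exists b : arc E,
     [&& a \notin X, b \in X, (val a).2 == y & (val b).1 == y]]].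

Definition fD (V : finType) (E : rel V) (X : {set arc E}) : nat :=
  #|SV X :|: SV (~: X)|.

Definition dbw (V : finType) (E : rel V) (k : nat) : Prop :=
  layout_width (@fD V E) k.

Definition adj_sub (V : finType) (E : rel V) (R C : {set V}) :
  'M['F_2]_(#|R|, #|C|) :=
  \matrix_(i < #|R|, j < #|C|)
     (if E (enum_val i) (enum_val j) then 1 else 0)%R.

Definition gD (V : finType) (E : rel V) (X : {set V}) : nat :=
  \rank (adj_sub E (~: X) X) + \rank (adj_sub E X (~: X)).

Definition bcrk (V : finType) (E : rel V) (k : nat) : Prop :=
  layout_width (@gD V E) k.

(* Let G_k have k sources s_i and k^2 pair vertices p_(i,j), with arcs
   s_i -> p_(i,j) and s_j -> p_(i,j).  No arc has a successor, so S^V_X is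
   empty for every arc set X and dbw(G_k) = 0.  Yet every vertex layout of
   G_k has width >= m when 3m <= k: a separator argument in subcubic trees
   (walk from any vertex along edges whose far side holds too many sources)
   yields a tree edge with >= m sources on each side of its cut X; pairing m
   sources outside X with m inside, each pair vertex p_(i_r,j_r) gives an
   identity entry of M[~X, X] or of M[X, ~X], so g_D(X) >= m. *)

From Pilot Require Import Defs.
From mathcomp Require Import all_boot all_order all_algebra zify.
From Stdlib Require Import Classical Wf_nat.
Set Implicit Arguments. Unset Strict Implicit. Unset Printing Implicit Defensive.

Lemma card_cover_le (I T : finType) (N : {set I}) (F : I -> {set T})
    (S : {set T}) (c : nat) :
  (forall l, l \in S -> exists2 z, z \in N & l \in F z) ->
  (forall z, z \in N -> #|F z| <= c) -> #|S| <= #|N| * c.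
Proof.
move=> cover small.
have S_sub : S \subset \bigcup_(z in N) F z.
  by apply/subsetP => l /cover[z zN lFz]; apply/bigcupP; exists z.
apply: leq_trans (subset_leq_card S_sub) _.
apply: (@leq_trans (\sum_(z in N) #|F z|)%N); last first.
  by rewrite -sum_nat_const; apply: leq_sum.
apply: (big_ind2 (fun (A : {set T}) n => #|A| <= n)) => //.
- by rewrite cards0.
- by move=> A p B q hA hB; exact: leq_trans (leq_card_setU A B).1 (leq_add hA hB).
Qed.

Definition branch (T : finType) (t : rel T) (y x : T) : {set T} :=
  [set v | connect (rm_edge t y x) y v].

Lemma rm_edge_sub (T : finType) (t : rel T) x y a b : rm_edge t x y a b -> t a b.
Proof. by case/andP. Qed.

Lemma first_step (T : finType) (t R : rel T) y w :
  subrel R t -> connect R y w -> w != y ->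
  exists z, R y z /\ connect (rm_edge t z y) z w.
Proof.
move=> Rt /connectP[p pP ->]; case: (shortenP pP) => [[|z q] /= pR uniq_p _].
  by rewrite eqxx.
move=> _; case/andP: pR => Ryz pq; exists z; split => //.
apply/connectP; exists q => //.
case/andP: uniq_p; rewrite inE negb_or => /andP[yz yq] _.
apply: (@sub_in_path _ (predC1 y) R); last exact: pq.
  move=> a b /= ay b_y Rab; rewrite /rm_edge /= (Rt _ _ Rab) /=.
  by rewrite (negbTE ay) (negbTE b_y) !andbF.
by rewrite /= (eq_sym z) yz /=; apply/allP => v vq /=; apply: contraNneq yq => <-.
Qed.

Lemma two_neighbours (T : finType) (t : rel T) y x z :
  t y x -> t y z -> z != x -> 2 <= #|[set v | t y v]|.
Proof.
move=> yx yz zx; apply: leq_trans (subset_leq_card (_ : [set x; z] \subset _)).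
  by rewrite cards2 eq_sym zx.
by apply/subsetP => v; rewrite !inE => /orP[] /eqP ->.
Qed.

(* Only the leaf y itself lies on the y-side of the edge at a leaf y. *)
Lemma leaf_side (T : finType) (t : rel T) (W : {set T}) y x :
  y \in leaves t -> t y x -> #|side t y x :&: W| <= 1.
Proof.
move=> yL yx; apply: leq_trans (subset_leq_card (_ : _ \subset [set y])) _.
  apply/subsetP => w; rewrite !inE => /andP[/andP[_ yw] _].
  apply/negPn/negP => wy.
  have [z [yz' _]] := first_step (@rm_edge_sub _ t y x) yw wy.
  move: yz'; rewrite /rm_edge /= eqxx /= => /andP[yz].
  rewrite negb_or => /andP[zx _].
  by move: yL; rewrite inE; have := two_neighbours yx yz zx; lia.
by rewrite cards1.
Qed.

Section SubcubicTree.

Variables (T : finType) (t : rel T).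
Hypotheses (tree_t : is_tree t) (subcubic_t : subcubic t).

Let t_sym : symmetric t. Proof. by case: tree_t. Qed.

Lemma branch_lt y x z :
  t y x -> t y z -> z != x -> #|branch t z y| < #|branch t y x|.
Proof.
case: tree_t => _ irr _ bridge yx yz zx.
have zy : z != y by apply: contraTneq yz => ->; rewrite irr.
have yx' : y != x by apply: contraTneq yx => ->; rewrite irr.
have yNbranch : ~~ connect (rm_edge t z y) z y by apply: bridge; rewrite t_sym.
apply: proper_card; rewrite properE; apply/andP; split; last first.
  by apply/subsetPn; exists y; rewrite inE ?connect0.
apply/subsetP => w; rewrite !inE => /connectP[p pP ->].
case: (shortenP pP) => q pq uniq_q _.
have yq : y \notin z :: q.
  rewrite inE negb_or eq_sym zy /=; apply/negP => yq.
  by move: yNbranch; rewrite (path_connect pq) // inE yq orbT.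
apply/connectP; exists (z :: q) => //=.
rewrite /rm_edge /= yz eqxx (negbTE zx) (negbTE yx') /=.
apply: (@sub_in_path _ (predC1 y) (rm_edge t z y)); last exact: pq.
  move=> a b /= ay b_y Rab; rewrite /rm_edge /= (rm_edge_sub Rab) /=.
  by rewrite (negbTE ay) (negbTE b_y) !andbF.
by apply/allP => v vq /=; apply: contraNneq yq => <-.
Qed.

Variable W : {set T}.
Hypothesis W_leaves : W \subset leaves t.

(* The y-side of an edge at an internal vertex y is covered by the (at most
   two) sides of the further edges at y. *)
Lemma internal_side y x c :
  y \notin leaves t -> t y x ->
  (forall z, t y z -> z != x -> #|side t z y :&: W| <= c) ->
  #|side t y x :&: W| <= 2 * c.
Proof.
move=> yL yx small.
have two : #|[set z | t y z & z != x]| <= 2.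
  have := subcubic_t y; rewrite (cardsD1 x) inE yx add1n ltnS.
  apply: leq_trans; apply: subset_leq_card; apply/subsetP => v.
  by rewrite !inE => /andP[-> ->].
apply: leq_trans (leq_mul two (leqnn c)).
apply: (card_cover_le (F := fun z => side t z y :&: W)); last first.
  by move=> z; rewrite inE => /andP[yz zx]; apply: small.
move=> l; rewrite in_setI /side in_set => /andP[/andP[lL yl] lW].
have ly : l != y by apply: contraNneq yL => <-.
have [z [yz' zl]] := first_step (@rm_edge_sub _ t y x) yl ly.
move: yz'; rewrite /rm_edge /= eqxx /= => /andP[yz].
rewrite negb_or => /andP[zx _].
by exists z; [rewrite inE yz zx | rewrite in_setI /side in_set lL zl lW].
Qed.

(* W is covered by a vertex r and the (at most three) sides pointing away
   from r. *)
Lemma around_vertex r c :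
  (forall z, t r z -> #|side t z r :&: W| <= c) -> #|W| <= 1 + 3 * c.
Proof.
move=> small; rewrite (cardsD1 r W); apply: leq_add; first by case: (r \in W).
apply: leq_trans (leq_mul (subcubic_t r) (leqnn c)).
apply: (card_cover_le (F := fun z => side t z r :&: W)); last first.
  by move=> z; rewrite inE; apply: small.
move=> l; rewrite in_setD1 => /andP[lr lW].
have lL : l \in leaves t by apply: (subsetP W_leaves).
have r_to_l : connect t r l by case: tree_t.
have [z [rz zl]] := first_step (fun a b (h : t a b) => h) r_to_l lr.
by exists z; [rewrite inE rz | rewrite in_setI /side in_set lL zl lW].
Qed.

Variable m : nat.
Hypotheses (m_gt0 : 0 < m) (W_large : 3 * m <= #|W|).

Lemma heavy_step y x :
  t y x -> #|W| < #|side t y x :&: W| + m ->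
  exists z, [/\ t y z, z != x & m <= #|side t z y :&: W|].
Proof.
move=> yx heavy.
have [/existsP[z /and3P[yz zx mz]] | none] :=
  boolP [exists z, [&& t y z, z != x & m <= #|side t z y :&: W|]].
  by exists z.
have light z : t y z -> z != x -> #|side t z y :&: W| <= m.-1.
  move=> yz zx; rewrite -ltnS prednK // ltnNge.
  by apply: contra none => mz; apply/existsP; exists z; rewrite yz zx mz.
case: (boolP (y \in leaves t)) => yL.
  by have := leaf_side W yL yx; lia.
by have := internal_side yL yx light; lia.
Qed.

(* Walking along heavy edges, the branch shrinks until a balanced edge. *)
Lemma balanced_from n y x :
  #|branch t y x| <= n -> t y x -> m <= #|side t y x :&: W| ->
  exists y' x', [/\ t y' x', m <= #|side t y' x' :&: W|
                           & #|side t y' x' :&: W| + m <= #|W|].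
Proof.
elim: n y x => [|n IH] y x.
  by rewrite leqn0 cards_eq0 => /eqP/setP/(_ y); rewrite !inE connect0.
move=> size_yx yx my.
case: (leqP (#|side t y x :&: W| + m) #|W|) => [balanced | heavy].
  by exists y, x.
have [z [yz zx mz]] := heavy_step yx heavy.
apply: (IH z y) => //; last by rewrite t_sym.
by rewrite -ltnS; apply: leq_trans size_yx; apply: branch_lt.
Qed.

Lemma separator :
  exists y x, [/\ t y x, m <= #|side t y x :&: W|
                       & #|side t y x :&: W| + m <= #|W|].
Proof.
have [r _] : exists r, r \in W by apply/card_gt0P; lia.
have [/existsP[z /andP[rz mz]] | none] :=
  boolP [exists z, t r z && (m <= #|side t z r :&: W|)].
  by apply: (balanced_from (leqnn _)) mz; rewrite t_sym.
have light z : t r z -> #|side t z r :&: W| <= m.-1.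
  move=> rz; rewrite -ltnS prednK // ltnNge.
  by apply: contra none => mz; apply/existsP; exists z; rewrite rz mz.
by have := around_vertex light; lia.
Qed.

End SubcubicTree.

Definition cat_vertex (k : nat) := ('I_k.+1 + 'I_k.+1)%type.

Definition cat_index k (v : cat_vertex k) : 'I_k.+1 :=
  match v with inl i => i | inr i => i end.

Definition caterpillar (k : nat) : rel (cat_vertex k) := fun a b =>
  match a, b with
  | inl i, inl j => (i.+1 == j :> nat) || (j.+1 == i :> nat)
  | inl i, inr j | inr i, inl j => i == j
  | inr _, inr _ => false
  end.

Lemma connect_inv (T : finType) (R : rel T) (P : pred T) x y :
  (forall a b, R a b -> P a -> P b) -> connect R x y -> P x -> P y.
Proof.
move=> closedP /connectP[p pP ->]; elim: p x pP => //= a p IH x /andP[Rxa pa] Px.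
exact: IH pa (closedP _ _ Rxa Px).
Qed.

Lemma rm_edge_symmetric (T : finType) (t : rel T) x y :
  symmetric t -> symmetric (rm_edge t x y).
Proof.
move=> t_sym a b; rewrite /rm_edge /= t_sym.
by case: (a == x); case: (a == y); case: (b == x); case: (b == y); rewrite ?andbF.
Qed.

Lemma bridge_sym (T : finType) (t : rel T) x y : symmetric t ->
  ~~ connect (rm_edge t y x) y x -> ~~ connect (rm_edge t x y) x y.
Proof.
move=> t_sym; have flip : rm_edge t x y =2 rm_edge t y x.
  by move=> a b; rewrite /rm_edge /= orbC.
by rewrite (eq_connect flip) (sym_connect_sym (rm_edge_symmetric y x t_sym)).
Qed.

Section Caterpillar.

Variable k : nat.
Local Notation ct := (@caterpillar k).

Lemma caterpillar_sym : symmetric ct.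
Proof. by move=> [a|a] [b|b] //=; rewrite ?(eq_sym a) // orbC. Qed.

Lemma caterpillar_irr : irreflexive ct.
Proof. by move=> [a|a] //=; rewrite !gtn_eqF. Qed.

Lemma caterpillar_connected (x y : cat_vertex k) : connect ct x y.
Proof.
have spine (i : 'I_k.+1) : connect ct (inl ord0) (inl i).
  case: i => i; elim: i => [|i IH] i_lt.
    by rewrite (_ : Ordinal i_lt = ord0) //; apply: val_inj.
  by apply: connect_trans (IH (ltnW i_lt)) _; apply: connect1; rewrite /= eqxx.
have from0 (v : cat_vertex k) : connect ct (inl ord0) v.
  case: v => i //; apply: connect_trans (spine i) _.
  by apply: connect1; rewrite /= eqxx.
by apply: connect_trans (from0 y); rewrite (sym_connect_sym caterpillar_sym).
Qed.

(* Spine edges are bridges: without inl i - inl (i+1), indices stay <= i. *)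
Lemma spine_bridge (i j : 'I_k.+1) : i.+1 = j ->
  ~~ connect (rm_edge ct (inl i) (inl j)) (inl i) (inl j).
Proof.
move=> ij; apply/negP => /connect_inv reach.
suff: i.+1 <= i by rewrite ltnn.
rewrite ij; apply: (reach (fun v => cat_index v <= i)) => //.
move=> [a|a] [b|b] //=; rewrite /rm_edge /=; last first.
- by move=> /andP[/eqP <-].
- by move=> /andP[/eqP <-].
move=> /andP[/orP[/eqP ab|/eqP ba]] ; last by lia.
rewrite !(inj_eq (@inl_inj _ _)) => not_ij ai; move: not_ij.
case: (eqVneq a i) => [a_i | a_ni] /=.
  have -> : b = j by apply: val_inj; rewrite /= -ab -ij a_i.
  by rewrite eqxx.
by move: a_ni; rewrite -(inj_eq val_inj) /=; lia.
Qed.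

(* Pendant edges are bridges: without inl i - inr i, inr i is isolated. *)
Lemma pendant_bridge (i : 'I_k.+1) :
  ~~ connect (rm_edge ct (inl i) (inr i)) (inl i) (inr i).
Proof.
apply/negP => /connect_inv reach.
suff: inr i != inr i :> cat_vertex k by rewrite eqxx.
apply: (reach (fun v => v != inr i)) => // a [b|b] //.
case: a => a //=; rewrite /rm_edge /= => /andP[/eqP -> not_ii] _.
by apply: contra not_ii => /eqP [->]; rewrite !eqxx.
Qed.

Lemma caterpillar_tree : is_tree ct.
Proof.
split; [exact: caterpillar_sym | exact: caterpillar_irr
       | exact: caterpillar_connected | ].
case=> a [b|b] //=.
- case/orP => /eqP ab; first exact: spine_bridge.
  by apply: bridge_sym; [exact: caterpillar_sym | exact: spine_bridge].
- by move/eqP <-; exact: pendant_bridge.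
- by move/eqP <-; apply: bridge_sym; [exact: caterpillar_sym | exact: pendant_bridge].
Qed.

Lemma pendant_nbrs (i : 'I_k.+1) : [set y | ct (inr i) y] \subset [set inl i].
Proof. by apply/subsetP => -[j|j]; rewrite !inE //= => /eqP ->. Qed.

Lemma caterpillar_subcubic : subcubic ct.
Proof.
move=> [i|i]; last first.
  by apply: leq_trans (subset_leq_card (pendant_nbrs i)) _; rewrite cards1.
apply: leq_trans (card_size [:: inr i; inl (inord i.+1); inl (inord i.-1)]).
apply: subset_leq_card; apply/subsetP => -[j|j]; rewrite !inE /=; last first.
  by move=> /eqP ->; rewrite eqxx.
case/orP => /eqP h; apply/orP; [left | right]; apply/eqP; congr inl;
  by apply: val_inj; rewrite /= inordK; have := ltn_ord i; have := ltn_ord j; lia.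
Qed.

Lemma caterpillar_leaves (v : cat_vertex k) : 0 < k ->
  (v \in leaves ct) = (if v is inr _ then true else false).
Proof.
move=> k_gt0; case: v => i; rewrite inE; last first.
  by apply: leq_trans (subset_leq_card (pendant_nbrs i)) _; rewrite cards1.
apply/negbTE; rewrite -ltnNge.
pose j : 'I_k.+1 := if i < k then inord i.+1 else inord i.-1.
apply: (@two_neighbours _ _ (inl i) (inr i) (inl j)) => //=.
by rewrite /j; case: ifP => ik; rewrite inordK; have := ltn_ord i; lia.
Qed.

End Caterpillar.

Lemma layout_exists (U : finType) : 2 <= #|U| ->
  exists (T : finType) (t : rel T) (beta : T -> U), is_layout t beta.
Proof.
move=> U2; have [k [cardU k_gt0]] : exists k, #|U| = k.+1 /\ 0 < k.
  by exists #|U|.-1; split; lia.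
exists (cat_vertex k), (@caterpillar k),
  (fun v => enum_val (cast_ord (esym cardU) (cat_index v))).
split; [exact: caterpillar_tree | exact: caterpillar_subcubic | | ].
  move=> [i|i] [j|j]; rewrite !caterpillar_leaves //= => _ _.
  by move=> /enum_val_inj /cast_ord_inj ->.
move=> u; exists (inr (cast_ord cardU (enum_rank u))).
  by rewrite caterpillar_leaves.
by rewrite /= cast_ordK enum_rankK.
Qed.

Lemma layout_width_exists (U : finType) (f : {set U} -> nat) : 2 <= #|U| ->
  exists k, layout_width f k.
Proof.
move=> U2; have [T [t [beta L]]] := layout_exists U2.
have some_width : exists k, layout_width_le f k.
  exists (\max_(X : {set U}) f X), T, t, beta.
  by split => // x y _; exact: (leq_bigmax (F := f)).
have [k [[kP k_min] _]] := @dec_inh_nat_subset_has_unique_least_element _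
  (fun n => classic (layout_width_le f n)) some_width.
by exists k; split => // j /k_min /leP.
Qed.

Lemma layout_card_image (U T : finType) (t : rel T) (beta : T -> U)
    (P : {set U}) (S : {set T}) :
  is_layout t beta -> S \subset leaves t ->
  #|beta @: S :&: P| = #|S :&: [set l in leaves t | beta l \in P]|.
Proof.
case=> _ _ beta_inj _ SL.
have inj : {in S :&: [set l in leaves t | beta l \in P] &, injective beta}.
  by move=> a b /setIP[_]; rewrite inE => /andP[aL _] /setIP[_];
     rewrite inE => /andP[bL _]; apply: beta_inj.
rewrite -(card_in_imset inj); apply: eq_card => v; apply/idP/idP.
  case/setIP => /imsetP[l lS ->] blP; apply: imset_f.
  by rewrite in_setI lS in_set (subsetP SL l lS) blP.
case/imsetP => l /setIP[lS]; rewrite inE => /andP[_ blP] ->.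
by rewrite in_setI blP andbT imset_f.
Qed.

Lemma rank_ge_identity (F : fieldType) (I : finType) p q (A : 'M[F]_(p, q))
    (S : {set I}) (f : I -> 'I_p) (h : I -> 'I_q) :
  (forall s u, s \in S -> u \in S -> A (f s) (h u) = (s == u)%:R%R) ->
  #|S| <= \rank A.
Proof.
move=> diag.
pose B := rowsub (fun r : 'I_#|S| => f (enum_val r)) A.
pose C := rowsub (fun r : 'I_#|S| => h (enum_val r)) B^T.
have -> : #|S| = \rank C.
  have -> : C = 1%:M%R.
    apply/matrixP => r c; rewrite !mxE diag ?enum_valP //.
    by rewrite (inj_eq enum_val_inj) eq_sym.
  by rewrite mxrank1.
have rank_rowsub m' n' (g : 'I_m' -> 'I_n') r (M : 'M[F]_(n', r)) :
  \rank (rowsub g M) <= \rank M by rewrite rowsubE mxrankM_maxr.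
by apply: leq_trans (rank_rowsub _ _ _ _ _) _; rewrite mxrank_tr rank_rowsub.
Qed.

Lemma rank_adj_sub_ge (V I : finType) (E : rel V) (R C : {set V})
    (S : {set I}) (f h : I -> V) :
  (forall s, s \in S -> f s \in R) -> (forall s, s \in S -> h s \in C) ->
  (forall s u, s \in S -> u \in S -> E (f s) (h u) = (s == u)) ->
  #|S| <= \rank (adj_sub E R C).
Proof.
move=> fR hC diag; case: (set_0Vmem S) => [-> | [s0 s0S]]; first by rewrite cards0.
apply: (rank_ge_identity (S := S) (f := fun s => enum_rank_in (fR _ s0S) (f s))
                         (h := fun s => enum_rank_in (hC _ s0S) (h s))).
move=> s u sS uS; rewrite mxE !enum_rankK_in ?fR ?hC // diag //.
by case: (s == u).
Qed.

Definition pair_vertex k := ('I_k + 'I_k * 'I_k)%type.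

Definition pair_arc k : rel (pair_vertex k) := fun a b =>
  match a, b with
  | inl i, inr ij => (i == ij.1) || (i == ij.2)
  | _, _ => false
  end.

Definition sources k : {set pair_vertex k} := inl @: [set: 'I_k].

Lemma pair_arc_irr k : irreflexive (@pair_arc k).
Proof. by case. Qed.

Lemma card_sources k : #|sources k| = k.
Proof. by rewrite card_imset ?cardsT ?card_ord // => a b []. Qed.

Lemma card_arcs_ge k : k <= #|{: Defs.arc (@pair_arc k)}|.
Proof.
pose diag_arc (i : 'I_k) : Defs.arc (@pair_arc k) :=
  exist _ (inl i, inr (i, i)) (introT orP (or_introl (eqxx i))).
have inj : injective diag_arc by move=> a b /(congr1 val) [].
by have := leq_card _ inj; rewrite card_ord.
Qed.

(* A digraph with no directed path of length two has S^V_X = {} for every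
   arc set X, hence directed branch-width 0 (given two arcs to lay out). *)
Lemma dbw_no_2path (V : finType) (E : rel V) :
  (forall u v w, E u v -> E v w -> False) -> 2 <= #|{: Defs.arc E}| -> dbw E 0.
Proof.
move=> no_path arcs2; have [T [t [beta L]]] := layout_exists arcs2.
split => //; exists T, t, beta; split => // x y _.
rewrite leqn0 cards_eq0; apply/eqP/setP => v; rewrite !inE.
apply/negbTE/negP => /orP[] /existsP[[[a1 a2] Ea] /existsP[[[b1 b2] Eb]]] /=;
  by case/and4P => _ _ /eqP ea /eqP eb; subst; exact: no_path Ea Eb.
Qed.

Lemma dbw_pair k : 2 <= k -> dbw (@pair_arc k) 0.
Proof.
move=> k2; apply: dbw_no_2path; last exact: leq_trans k2 (card_arcs_ge k).
by move=> [?|?] [?|?] [?|?].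
Qed.

Lemma gD_balanced_cut k m (X : {set pair_vertex k}) :
  m <= #|[set i | inl i \in X]| -> m <= #|[set i | inl i \notin X]| ->
  m <= gD (@pair_arc k) X.
Proof.
move=> m1 m0.
pose it (s : 'I_m) : 'I_k := enum_val (widen_ord m0 s).
pose jt (s : 'I_m) : 'I_k := enum_val (widen_ord m1 s).
have itA s : inl (it s) \notin X by have := enum_valP (widen_ord m0 s); rewrite inE.
have jtA s : inl (jt s) \in X by have := enum_valP (widen_ord m1 s); rewrite inE.
have it_inj : injective it.
  by move=> a b /enum_val_inj /(congr1 val) ab; apply: val_inj.
have jt_inj : injective jt.
  by move=> a b /enum_val_inj /(congr1 val) ab; apply: val_inj.
have it_jt s u : (it s == jt u) = false.
  by apply/negbTE; apply: contraNneq (itA s) => ->.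
pose pair (s : 'I_m) : pair_vertex k := inr (it s, jt s).
pose S1 := [set s | pair s \in X].
rewrite /gD -{1}(card_ord m) -(cardsC S1); apply: leq_add.
  apply: (rank_adj_sub_ge (f := fun s => inl (it s)) (h := pair)).
  - by move=> s _; rewrite inE.
  - by move=> s; rewrite inE.
  - by move=> s u _ _; rewrite /= it_jt orbF (inj_eq it_inj).
apply: (rank_adj_sub_ge (f := fun s => inl (jt s)) (h := pair)).
- by move=> s _.
- by move=> s; rewrite !inE.
- by move=> s u _ _; rewrite /= eq_sym it_jt (inj_eq jt_inj).
Qed.

Lemma card_sources_in k (X : {set pair_vertex k}) :
  #|[set i | inl i \in X]| = #|X :&: sources k|.
Proof.
have inl_inj : injective (@inl 'I_k ('I_k * 'I_k)%type) by move=> a b [].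
rewrite -(card_imset [set i | inl i \in X] inl_inj); apply: eq_card => v.
apply/imsetP/idP => [[i] | ]; first by rewrite !inE => iX ->; rewrite iX imset_f.
by case/setIP => vX /imsetP[i _ vi]; exists i; rewrite // inE -vi.
Qed.

Lemma gD_layout_large k m (T : finType) (t : rel T) (beta : T -> pair_vertex k) :
  is_layout t beta -> 0 < m -> 3 * m <= k ->
  exists y x, t y x /\ m <= gD (@pair_arc k) (beta @: side t y x).
Proof.
move=> L m_gt0 mk; have [tree_t sub_t _ _] := L.
pose W := [set l in leaves t | beta l \in sources k].
have WL : W \subset leaves t by apply/subsetP => l; rewrite inE => /andP[].
have cardW : #|W| = k.
  have := layout_card_image (sources k) L (subxx (leaves t)).
  rewrite (setIidPr WL) => <-.
  have -> : beta @: leaves t = setT.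
    by apply/setP => v; rewrite inE; have [_ _ _ /(_ v)[l lL <-]] := L; exact: imset_f.
  by rewrite setTI card_sources.
have W_large : 3 * m <= #|W| by rewrite cardW.
have [y [x [yx m1 m2]]] := separator tree_t sub_t WL m_gt0 W_large.
exists y, x; split => //; set X := beta @: side t y x.
have sideL : side t y x \subset leaves t.
  by apply/subsetP => l; rewrite inE => /andP[].
have inX : #|X :&: sources k| = #|side t y x :&: W|.
  by rewrite /X (layout_card_image _ L sideL).
apply: gD_balanced_cut; rewrite ?card_sources_in ?inX //.
have -> : [set i | inl i \notin X] = [set i | inl i \in ~: X].
  by apply/setP => i; rewrite !inE.
by rewrite card_sources_in setIC -setDE cardsD setIC inX card_sources; lia.
Qed.

Theorem mainTheorem15 :
  ~ exists g : nat -> nat,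
      forall (V : finType) (E : rel V), irreflexive E ->
      forall a b : nat, bcrk E a -> dbw E b -> a <= g b.
Proof.
case=> g bound.
pose m := (g 0).+1; pose k := 3 * m.
have k2 : 2 <= k by rewrite /k /m; lia.
have V2 : 2 <= #|{: pair_vertex k}|.
  by rewrite (leq_trans k2) // -{1}(card_sources k) max_card.
have [a bcrk_a] := layout_width_exists (gD (@pair_arc k)) V2.
have a_le := bound _ _ (@pair_arc_irr k) a 0 bcrk_a (dbw_pair k2).
case: bcrk_a => -[T [t [beta [L width_a]]]] _.
have [y [x [yx large]]] := gD_layout_large L (isT : 0 < m) (leqnn k).
by have := width_a y x yx; rewrite /m in large; lia.
Qed.
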